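(* Let $n\ge2$ and let $T=P(x,u_0,u_1,u_2)$, with $P$ a real polynomial of total degree at least $2$ in $u_0,u_1,u_2$ (a genuinely non-linear operator of order at most two). If $T(\mathcal P_n)\subset\mathcal P_n$, then $n\le4$.
   Context: Operators are identified with polynomials $P(x,u_0,u_1,u_2)$ acting on smooth $f$ by $P[f](x)=P(x,f(x),f'(x),f''(x))$. $\mathcal P_s$ denotes the space of real polynomials in $x$ of degree at most $s$. *)

From HB Require Import structures.
From mathcomp Require Import all_boot all_order all_algebra.
From mathcomp Require Import mpoly.
Set Implicit Arguments. Unset Strict Implicit. Unset Printing Implicit Defensive.
Import Order.TTheory GRing.Theory Num.Theory.
Local Open Scope ring_scope.

(* Operators P(x,u0,u1,u2) are multivariate polynomials in 4 variables:
   variable 0 = x, variable 1 = u0, variable 2 = u1, variable 3 = u2. *)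

Definition op_subst (R : comRingType) (f : {poly R}) : 'I_4 -> {poly R} :=
  fun i => match val i with
           | 0%N => 'X
           | 1%N => f
           | 2%N => f^`()
           | _ => f^`(2)
           end.

Definition apply_op (R : comRingType) (P : {mpoly R[4]}) (f : {poly R}) : {poly R} :=
  (map_mpoly polyC P).@[op_subst f].

Definition udeg_ge2 (R : comRingType) (P : {mpoly R[4]}) : Prop :=
  exists2 m : 'X_{1..4}, m \in msupp P &
    (2 <= m (inord 1) + m (inord 2) + m (inord 3))%N.

Definition inPs (R : ringType) (s : nat) (f : {poly R}) : bool := (size f <= s.+1)%N.

From mathcomp Require Import all_boot all_order all_algebra.
From mathcomp Require Import mpoly.
From mathcomp Require Import zify ring.
Set Implicit Arguments. Unset Strict Implicit. Unset Printing Implicit Defensive.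
Import GRing.Theory Num.Theory.
Local Open Scope ring_scope.

(* Write P = sum_m c_m x^i u0^a u1^b u2^c and suppose it maps P_n into itself with n >= 5.
   Since P[a f], P[f(x - t)](x + t) and P[f + a] are polynomials in the parameter a or t all
   of whose values lie in P_n, so do their coefficients.  This successively isolates the
   part of P of some degree D >= 2 in (u0, u1, u2), then its terms of maximal x-degree (with
   the power of x dropped), then the coefficient of a^A, where A is the maximal u0-degree.
   If A <= D - 2, the image of x^n under the resulting operator has a nonzero coefficient
   at x^((n-1) b + (n-2) c) for some b + c >= 2, a degree at least 2n - 4 > n.  Otherwise, on
   x^(r+2) every term gives a multiple of x^(r D + 2 a + b); only u0^(D-1) u2 and
   u0^(D-2) u1^2 can share the top exponent, and their weights (r+2)(r+1) and (r+2)^2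
   cannot cancel for both r = n - 3 and r = n - 2. *)

Definition xdeg (m : 'X_{1..4}) : nat := m (inord 0).
Definition u0deg (m : 'X_{1..4}) : nat := m (inord 1).
Definition u1deg (m : 'X_{1..4}) : nat := m (inord 2).
Definition u2deg (m : 'X_{1..4}) : nat := m (inord 3).
Definition udeg (m : 'X_{1..4}) : nat := (u0deg m + u1deg m + u2deg m)%N.

Lemma inord4 k (lt_k4 : (k < 4)%N) : inord k = Ordinal lt_k4.
Proof. by apply/val_inj; rewrite /= inordK. Qed.

Lemma eq_mnm4 (m m' : 'X_{1..4}) :
  xdeg m = xdeg m' -> u0deg m = u0deg m' -> u1deg m = u1deg m' ->
  u2deg m = u2deg m' -> m = m'.
Proof.
move=> e0 e1 e2 e3; apply/mnmP => -[[|[|[|[|k]]]] lt_k4] //.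
- by move: e0; rewrite /xdeg inord4.
- by move: e1; rewrite /u0deg inord4.
- by move: e2; rewrite /u1deg inord4.
- by move: e3; rewrite /u2deg inord4.
Qed.

Lemma bigmax_seq_attained (T : eqType) (s : seq T) (F : T -> nat) x0 :
  x0 \in s -> exists2 x, x \in s & F x = \max_(y <- s) F y.
Proof.
move=> x0s; have : s != [::] by case: s x0s.
elim: s {x0 x0s} => // a [|b s] IH _; rewrite big_cons.
  by exists a; rewrite ?mem_head // big_nil maxn0.
have [x xs <-] := IH isT; case: (leqP (F x) (F a)) => [le_xa | lt_ax].
  by exists a; rewrite ?mem_head.
by exists x; rewrite // inE xs orbT.
Qed.

Section NonlinearOperators.
Variable R : numDomainType.

Definition dmon (h : {poly R}) (m : 'X_{1..4}) : {poly R} :=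
  h^`() ^+ u1deg m * h^`(2) ^+ u2deg m.
Definition umon (g : {poly R}) (m : 'X_{1..4}) : {poly R} := g ^+ u0deg m * dmon g m.
Definition opmon (f : {poly R}) (m : 'X_{1..4}) : {poly R} := 'X^(xdeg m) * umon f m.

Definition size_preserving (N : nat) (F : {poly R} -> {poly R}) : Prop :=
  forall f : {poly R}, (size f <= N)%N -> (size (F f) <= N)%N.

Lemma apply_opE (P : {mpoly R[4]}) f :
  apply_op P f = \sum_(m <- msupp P) P@_m *: opmon f m.
Proof.
rewrite /apply_op mevalE (perm_big _ (msupp_map_mpoly _ (@polyC_inj _))) /=.
apply: eq_bigr => m _; rewrite mcoeff_map_mpoly -mul_polyC; congr (_ * _).
rewrite !big_ord_recl big_ord0 mulr1 /opmon /umon /dmon !mulrA /=.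
by congr (_ * _ * _ * _); [congr ('X^(m _)) | congr (_ ^+ m _) ..];
  apply/val_inj; rewrite /= inordK.
Qed.

Lemma poly_eq0_horner (p : {poly R}) : (forall a, p.[a] = 0) -> p = 0.
Proof.
move=> p_a; apply: (@roots_geq_poly_eq0 _ p [seq k%:R | k <- iota 0 (size p)]).
- by apply/allP => x /mapP [k _ ->]; rewrite /root p_a.
- by rewrite map_inj_uniq ?iota_uniq // => x y /eqP; rewrite eqr_nat => /eqP.
- by rewrite size_map size_iota.
Qed.

Lemma size_param_coef_le K N (G : nat -> {poly R}) :
  (forall a : R, (size (\sum_(j < K) a ^+ j *: G j)%R <= N)%N) ->
  forall j, (j < K)%N -> (size (G j) <= N)%N.
Proof.
move=> size_a j lt_jK; apply/leq_sizeP => e le_Ne.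
have coef_e0 : \poly_(i < K) (G i)`_e = 0.
  apply: poly_eq0_horner => a; rewrite horner_poly -[RHS](leq_sizeP _ _ (size_a a) e le_Ne).
  by rewrite coef_sum; apply: eq_bigr => i _; rewrite coefZ mulrC.
by move/(congr1 (fun p : {poly R} => p`_j)): coef_e0; rewrite coef_poly lt_jK coef0.
Qed.

Lemma size_param_coef_sum_le (T : Type) (s : seq T) K N (H : T -> nat -> {poly R}) :
  (forall a : R, (size (\sum_(m <- s) \sum_(j < K) a ^+ j *: H m j)%R <= N)%N) ->
  forall j, (j < K)%N -> (size (\sum_(m <- s) H m j)%R <= N)%N.
Proof.
move=> size_a; apply: (size_param_coef_le (G := fun j => \sum_(m <- s) H m j)) => a.
by under eq_bigr do rewrite scaler_sumr; rewrite exchange_big; exact: size_a.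
Qed.

Lemma size_sum_scaleXn_eq0 (T : Type) (s : seq T) (k : T -> R) (e : T -> nat) N j :
  (size (\sum_(m <- s) k m *: 'X^(e m))%R <= N)%N -> (N <= j)%N ->
  \sum_(m <- s | e m == j) k m = 0.
Proof. by move=> /leq_sizeP size_s le_Nj; rewrite -[RHS](size_s j le_Nj) coef_sumMXn. Qed.

Lemma opmonZ a f m : opmon (a *: f) m = a ^+ udeg m *: opmon f m.
Proof.
rewrite /opmon /umon /dmon derivZ derivnZ !exprZn /udeg !exprD.
by rewrite -!mul_polyC !polyCM; ring.
Qed.

Lemma size_preserving_udeg_part s c N D :
  size_preserving N (fun f => \sum_(m <- s) c m *: opmon f m) ->
  size_preserving N (fun f => \sum_(m <- [seq m <- s | udeg m == D]) c m *: opmon f m).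
Proof.
move=> pres_s f size_f; pose K := (maxn D (\max_(m <- s) udeg m)).+1.
rewrite big_filter big_mkcond /=; under eq_bigr do rewrite eq_sym.
apply: (size_param_coef_sum_le (K := K)
  (H := fun m j => if j == udeg m then c m *: opmon f m else 0)); last first.
  by rewrite ltnS leq_maxl.
move=> a; rewrite (eq_big_seq (fun m => c m *: opmon (a *: f) m)); last first.
  move=> m ms; under eq_bigr do rewrite fun_if scaler0.
  rewrite -big_mkcond (big_ord1_eq _ (fun j => a ^+ j *: (c m *: opmon f m))).
  rewrite ltnS (leq_trans _ (leq_maxr _ _)) ?leq_bigmax_seq //.
  by rewrite opmonZ !scalerA mulrC.
by apply: pres_s; rewrite (leq_trans (size_scale_leq _ _)).
Qed.

Lemma exprDn_polyC (p : {poly R}) t i K : (i < K)%N ->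
  \sum_(j < K) t ^+ j *: (p ^+ (i - j) *+ 'C(i, j)) = (p + t%:P) ^+ i.
Proof.
move=> lt_iK; rewrite exprDn (big_ord_widen K (fun j => p ^+ (i - j) * t%:P ^+ j *+ 'C(i, j))) //.
rewrite [RHS]big_mkcond; apply: eq_bigr => j _; case: ltnP => [_ | lt_ij].
  by rewrite -polyC_exp mulrC mul_polyC scalerMnr.
by rewrite bin_small // mulr0n scaler0.
Qed.

Lemma umon_comp_XaddC g t m :
  umon g m \Po ('X + t%:P) = umon (g \Po ('X + t%:P)) m.
Proof.
have deriv_comp_XaddC q : q^`() \Po ('X + t%:P) = (q \Po ('X + t%:P))^`().
  by rewrite deriv_comp derivD derivX derivC addr0 mulr1.
by rewrite /umon /dmon !rmorphM !rmorphXn /= !deriv_comp_XaddC.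
Qed.

Lemma opmon_shift g t m :
  opmon (g \Po ('X - t%:P)) m \Po ('X + t%:P) = ('X + t%:P) ^+ xdeg m * umon g m.
Proof.
rewrite /opmon rmorphM rmorphXn /= comp_polyX umon_comp_XaddC -comp_polyA.
by rewrite comp_polyB comp_polyX comp_polyC addrK comp_polyXr.
Qed.

Lemma size_preserving_top_xdeg_part s c N I :
  {in s, forall m, (xdeg m <= I)%N} ->
  size_preserving N (fun f => \sum_(m <- s) c m *: opmon f m) ->
  size_preserving N (fun g => \sum_(m <- [seq m <- s | xdeg m == I]) c m *: umon g m).
Proof.
move=> le_xdeg_I pres_s g size_g.
pose H m j := c m *: ('X ^+ (xdeg m - j) *+ 'C(xdeg m, j) * umon g m).
rewrite big_filter big_mkcond /= (eq_big_seq (H^~ I)); last first.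
  move=> m ms; rewrite /H; case: eqP => [-> | ne_xdeg].
    by rewrite subnn binn mul1r.
  by rewrite bin_small ?mul0r ?scaler0 // ltn_neqAle le_xdeg_I // andbT; apply/eqP.
apply: (size_param_coef_sum_le (K := I.+1) (H := H)) => // t.
rewrite (eq_big_seq (fun m => (c m *: opmon (g \Po ('X - t%:P)) m) \Po ('X + t%:P))).
  rewrite -linear_sum size_comp_poly2 ?size_XaddC //; apply: pres_s.
  by rewrite size_comp_poly2 ?size_XsubC.
move=> m ms; rewrite linearZ /= opmon_shift -(exprDn_polyC _ _ (K := I.+1)) ?ltnS ?le_xdeg_I //.
rewrite mulr_suml scaler_sumr; apply: eq_bigr => j _.
by rewrite /H scalerA mulrC -scalerA -scalerAl.
Qed.

Lemma size_preserving_top_u0deg_part s c N A :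
  (0 < N)%N -> {in s, forall m, (u0deg m <= A)%N} ->
  size_preserving N (fun g => \sum_(m <- s) c m *: umon g m) ->
  size_preserving N
    (fun h => \sum_(m <- s) c m *: (h ^+ (u0deg m - A) *+ 'C(u0deg m, A) * dmon h m)).
Proof.
move=> N_gt0 le_u0deg_A pres_s h size_h.
apply: (size_param_coef_sum_le (K := A.+1)
  (H := fun m j => c m *: (h ^+ (u0deg m - j) *+ 'C(u0deg m, j) * dmon h m))) => // a.
rewrite (eq_big_seq (fun m => c m *: umon (h + a%:P) m)).
  apply: pres_s; rewrite (leq_trans (size_polyD _ _)) // geq_max size_h size_polyC.
  by case: (a != 0).
move=> m ms; rewrite /umon /dmon derivD derivnD derivC derivnC !addr0.
rewrite -(exprDn_polyC _ _ (K := A.+1)) ?ltnS ?le_u0deg_A // mulr_suml scaler_sumr.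
by apply: eq_bigr => j _; rewrite scalerA mulrC -scalerA -scalerAl.
Qed.

Definition dmon_weight (r : nat) (m : 'X_{1..4}) : nat :=
  (r.+2 ^ u1deg m * (r.+2 * r.+1) ^ u2deg m)%N.

Lemma dmon_weight_neq0 r m : (dmon_weight r m)%:R != 0 :> R.
Proof. by rewrite pnatr_eq0 muln_eq0 !expn_eq0. Qed.

Lemma dmonXn r m : dmon 'X^(r.+2) m = (dmon_weight r m)%:R *: 'X^(r.+1 * u1deg m + r * u2deg m).
Proof.
have deriv2Xn : ('X^(r.+2) : {poly R})^`(2) = (r.+2 * r.+1)%:R *: 'X^r.
  by rewrite /= derivXn -scaler_nat derivZ derivXn -scaler_nat scalerA -natrM mulnC.
rewrite /dmon deriv2Xn derivXn -scaler_nat !exprZn -!exprM /=.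
by rewrite exprD -!mul_polyC /dmon_weight !natrM !natrX !natrM !polyCM; ring.
Qed.

Lemma umonXn r m :
  umon 'X^(r.+2) m = (dmon_weight r m)%:R *: 'X^(r.+2 * u0deg m + (r.+1 * u1deg m + r * u2deg m)).
Proof. by rewrite /umon dmonXn -exprM -!mul_polyC !exprD mulrCA. Qed.

Lemma sum_cond_D1_seq (T : eqType) (s : seq T) (P : pred T) (F : T -> R) j :
  j \in s -> uniq s -> P j ->
  \sum_(i <- s | P i) F i = F j + \sum_(i <- s | (i != j) && P i) F i.
Proof. by move=> js s_uniq Pj; rewrite big_mkcond (bigD1_seq j) //= Pj -big_mkcondr. Qed.

Lemma u2_u1sq_weights_independent (x y : R) r :
  x * (r.+2 * r.+1)%:R + y * (r.+2 ^ 2)%:R = 0 ->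
  x * (r.+1 * r)%:R + y * (r.+1 ^ 2)%:R = 0 -> x = 0.
Proof.
move=> eq_r1 eq_r.
have : x * (r.+1 * r.+2)%:R = (r.+1 ^ 2)%:R * (x * (r.+2 * r.+1)%:R + y * (r.+2 ^ 2)%:R)
    - (r.+2 ^ 2)%:R * (x * (r.+1 * r)%:R + y * (r.+1 ^ 2)%:R).
  by rewrite !natrX !natrM -[r.+2]addn2 -[r.+1]addn1 !natrD; ring.
by rewrite eq_r1 eq_r !mulr0 subr0 => /eqP; rewrite mulf_eq0 pnatr_eq0 orbF => /eqP.
Qed.

Lemma scale_XnM_natmul (a : R) k w i j :
  a *: ('X^i *+ k * (w%:R *: 'X^j)) = (a * (k * w)%:R) *: 'X^(i + j).
Proof. by rewrite exprD -mulr_natl -!mul_polyC !polyCM natrM; ring. Qed.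

Section TopTerms.
Variables (s : seq 'X_{1..4}) (c : 'X_{1..4} -> R) (I D q : nat).
Hypothesis s_uniq : uniq s.
Hypothesis c_neq0 : {in s, forall m, c m != 0}.
Hypothesis xdeg_s : {in s, forall m, xdeg m = I}.
Hypothesis udeg_s : {in s, forall m, udeg m = D}.
Hypothesis D_ge2 : (2 <= D)%N.
Hypothesis q_ge3 : (3 <= q)%N.

Lemma eq_top_terms m m' : m \in s -> m' \in s ->
  u0deg m = u0deg m' -> u1deg m = u1deg m' -> m = m'.
Proof.
move=> ms m's eq_u0 eq_u1; apply: eq_mnm4 => //; first by rewrite !xdeg_s.
by move: (udeg_s ms) (udeg_s m's); rewrite /udeg; lia.
Qed.

Section MaximalU0deg.
Variables (A : nat) (mA : 'X_{1..4}).
Hypothesis u0deg_s : {in s, forall m, (u0deg m <= A)%N}.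
Hypothesis mA_s : mA \in s.
Hypothesis u0deg_mA : u0deg mA = A.

Lemma low_u0deg_not_size_preserving : (A.+2 <= D)%N ->
  ~ size_preserving q.+3 (fun g => \sum_(m <- s) c m *: umon g m).
Proof.
move=> le_A2_D pres_s.
have := size_preserving_top_u0deg_part (N := q.+3) isT u0deg_s pres_s (f := 'X^(q.+2)).
rewrite size_polyXn => /(_ (leqnn _)).
pose e m := (q.+2 * (u0deg m - A) + (q.+1 * u1deg m + q * u2deg m))%N.
under eq_bigr => m _ do rewrite dmonXn -exprM scale_XnM_natmul.
move/size_sum_scaleXn_eq0 => /(_ (e mA)).
have e_mA : (q.+2 < e mA)%N.
  rewrite /e u0deg_mA subnn; move: (udeg_s mA_s); rewrite /udeg u0deg_mA; nia.
move=> /(_ e_mA); rewrite (sum_cond_D1_seq _ mA_s) // big1_seq ?addr0.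
  by apply/eqP; rewrite mulf_neq0 ?c_neq0 // u0deg_mA binn mul1n dmon_weight_neq0.
move=> m /andP[/andP[ne_m_mA /eqP e_m] ms].
have [lt_u0 | ge_u0] := ltnP (u0deg m) A; first by rewrite bin_small ?mul0n ?mulr0.
have u0_m : u0deg m = A by apply/eqP; rewrite eqn_leq u0deg_s.
case/eqP: ne_m_mA; apply: eq_top_terms => //; first by rewrite u0_m.
move: e_m (udeg_s ms) (udeg_s mA_s); rewrite /e /udeg u0_m u0deg_mA subnn; nia.
Qed.

Lemma high_u0deg_not_size_preserving : (D <= A.+1)%N ->
  ~ size_preserving q.+3 (fun g => \sum_(m <- s) c m *: umon g m).
Proof.
move=> le_D_A1 pres_s.
pose top m := (2 * u0deg m + u1deg m == 2 * A + u1deg mA)%N.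
have top_coef_eq0 r : (q <= r.+1)%N -> (r <= q)%N ->
    \sum_(m <- s | top m) c m * (dmon_weight r m)%:R = 0.
  move=> le_q_r1 le_r_q; have := pres_s 'X^(r.+2); rewrite size_polyXn ltnS => /(_ le_r_q).
  under eq_bigr do rewrite umonXn scalerA.
  move/size_sum_scaleXn_eq0 => /(_ (r * D + (2 * A + u1deg mA))%N) top_eq0.
  rewrite -[RHS]top_eq0; last by move: (udeg_s mA_s); rewrite /udeg; nia.
  rewrite big_seq_cond [RHS]big_seq_cond; apply: eq_bigl => m.
  case: (boolP (m \in s)) => //= ms.
  have -> : (r.+2 * u0deg m + (r.+1 * u1deg m + r * u2deg m) =
      r * udeg m + (2 * u0deg m + u1deg m))%N by rewrite /udeg; ring.
  by rewrite udeg_s // eqn_add2l.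
have top_mA : top mA by rewrite /top u0deg_mA.
have top_other m : m \in s -> top m -> m != mA ->
    (u1deg mA = 0 /\ u2deg mA = 1 /\ u1deg m = 2 /\ u2deg m = 0)%N.
  move=> ms /eqP top_m ne_m_mA.
  have ne_u01 : ~ (u0deg m = u0deg mA /\ u1deg m = u1deg mA).
    by case=> eq_u0 eq_u1; case/eqP: ne_m_mA; apply: eq_top_terms.
  move: (udeg_s ms) (udeg_s mA_s) (u0deg_s ms); rewrite /udeg; lia.
have [/hasP[m' m's /andP[ne_m'_mA top_m']] | no_other] :=
  boolP (has (fun m => (m != mA) && top m) s); last first.
  have := top_coef_eq0 q (leqnSn q) (leqnn q).
  rewrite (sum_cond_D1_seq _ mA_s) // big1_seq ?addr0.
    by apply/eqP; rewrite mulf_neq0 ?c_neq0 ?dmon_weight_neq0.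
  move=> m /andP[/andP[ne_m_mA top_m] ms]; case/hasP: no_other.
  by exists m; rewrite ?ne_m_mA.
have [u1_mA [u2_mA _]] := top_other m' m's top_m' ne_m'_mA.
pose y := \sum_(m <- s | (m != mA) && top m) c m.
have top_coefE r : \sum_(m <- s | top m) c m * (dmon_weight r m)%:R =
    c mA * (r.+2 * r.+1)%:R + y * (r.+2 ^ 2)%:R.
  rewrite (sum_cond_D1_seq _ mA_s) // /dmon_weight u1_mA u2_mA expn0 mul1n expn1 mulr_suml.
  congr (_ + _); rewrite big_seq_cond [RHS]big_seq_cond.
  apply: eq_bigr => m /and3P[ms ne_m_mA top_m].
  by have [_ [_ [-> ->]]] := top_other m ms top_m ne_m_mA; rewrite expn0 muln1.
have q_gt0 : (0 < q)%N by apply: leq_trans q_ge3.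
have := top_coef_eq0 q.-1 (eq_leq (esym (prednK q_gt0))) (leq_pred q).
have := top_coef_eq0 q (leqnSn q) (leqnn q).
rewrite !top_coefE prednK // => eq_q eq_q1.
by move/eqP: (c_neq0 mA_s); apply; exact: u2_u1sq_weights_independent eq_q eq_q1.
Qed.

End MaximalU0deg.

Lemma top_terms_not_size_preserving m0 : m0 \in s ->
  ~ size_preserving q.+3 (fun g => \sum_(m <- s) c m *: umon g m).
Proof.
move=> m0_s; have [mA mA_s u0deg_mA] := bigmax_seq_attained u0deg m0_s.
have u0deg_s : {in s, forall m, (u0deg m <= u0deg mA)%N}.
  by move=> m ms; rewrite u0deg_mA leq_bigmax_seq.
have [le_A2_D | lt_D_A2] := leqP (u0deg mA).+2 D.
  exact: low_u0deg_not_size_preserving u0deg_s mA_s erefl le_A2_D.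
exact: high_u0deg_not_size_preserving u0deg_s mA_s erefl lt_D_A2.
Qed.

End TopTerms.

End NonlinearOperators.

Theorem mainTheorem5 (R : realFieldType) (n : nat) (P : {mpoly R[4]}) :
  (2 <= n)%N ->
  udeg_ge2 P ->
  (forall f : {poly R}, inPs n f -> inPs n (apply_op P f)) ->
  (n <= 4)%N.
Proof.
move=> n_ge2 [m0 m0_P udeg_m0] pres_P; rewrite leqNgt; apply/negP => n_gt4.
have [q n_q q_ge3] : exists2 q, n = q.+2 & (3 <= q)%N by exists (n - 2)%N; lia.
subst n.
pose s1 := [seq m <- msupp P | udeg m == udeg m0].
pose s2 := [seq m <- s1 | xdeg m == \max_(m <- s1) xdeg m].
have pres_s2 : size_preserving q.+3 (fun g => \sum_(m <- s2) P@_m *: umon g m).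
  apply/size_preserving_top_xdeg_part/size_preserving_udeg_part.
    by move=> m ms; rewrite leq_bigmax_seq.
  by move=> f; rewrite -apply_opE; exact: pres_P.
have [m1 m1_s1 xdeg_m1] : exists2 m, m \in s1 & xdeg m = \max_(m <- s1) xdeg m.
  by apply: (bigmax_seq_attained _ (x0 := m0)); rewrite mem_filter eqxx.
apply: (top_terms_not_size_preserving (I := \max_(m <- s1) xdeg m) (m0 := m1)
  _ _ _ _ udeg_m0 q_ge3 _ pres_s2).
- by rewrite !filter_uniq // msupp_uniq.
- by move=> m; rewrite /s2 /s1 !mem_filter => /and3P[_ _]; rewrite mcoeff_msupp.
- by move=> m; rewrite /s2 mem_filter => /andP[/eqP].
- by move=> m; rewrite /s2 /s1 !mem_filter => /and3P[_ /eqP].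
- by rewrite /s2 mem_filter m1_s1 xdeg_m1 eqxx.
Qed.
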